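(* Let $\mathcal T^*$ be an Aronszajn tree and let $B$ be an uncountable set of branches of $\mathcal T^*$ such that no two elements of $B$ have the same order type. Then there are incompatible elements $s,t\in\mathcal T^*$ such that both $\{b\in B:s\in b\}$ and $\{b\in B:t\in b\}$ are uncountable.
   Context: An Aronszajn tree is a tree of height $\omega_1$ all of whose levels are countable and which has no uncountable branch. A branch is a maximal linearly ordered subset. Two elements are incompatible if neither is below or equal to the other. *)

Set Implicit Arguments.

Definition countable_set {U : Type} (A : U -> Prop) : Prop :=
  exists f : U -> nat, forall x y, A x -> A y -> f x = f y -> x = y.

Definition well_ordered_on {U : Type} (le : U -> U -> Prop) (A : U -> Prop) : Prop :=
  (forall x, A x -> le x x) /\
  (forall x y z, A x -> A y -> A z -> le x y -> le y z -> le x z) /\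
  (forall x y, A x -> A y -> le x y -> le y x -> x = y) /\
  (forall x y, A x -> A y -> le x y \/ le y x) /\
  (forall S : U -> Prop, (forall x, S x -> A x) -> (exists x, S x) ->
     exists m, S m /\ forall x, S x -> le m x).

Definition order_iso {U V : Type} (leU : U -> U -> Prop) (A : U -> Prop)
    (leV : V -> V -> Prop) (B : V -> Prop) : Prop :=
  exists f : U -> V,
    (forall x, A x -> B (f x)) /\
    (forall y, B y -> exists x, A x /\ f x = y) /\
    (forall x y, A x -> A y -> f x = f y -> x = y) /\
    (forall x y, A x -> A y -> (leU x y <-> leV (f x) (f y))).

Definition preds {T : Type} (le : T -> T -> Prop) (t : T) : T -> Prop :=
  fun s => le s t /\ s <> t.

Definition is_tree {T : Type} (le : T -> T -> Prop) : Prop :=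
  (forall x, le x x) /\
  (forall x y z, le x y -> le y z -> le x z) /\
  (forall x y, le x y -> le y x -> x = y) /\
  (forall t, well_ordered_on le (preds le t)).

(* Countable ordinals are represented by well-orders on subsets of nat.
   The height of t is the order type of preds t; the level of t is the set
   of elements with the same height. *)
Definition countable_wo (D : nat -> Prop) (R : nat -> nat -> Prop) : Prop :=
  well_ordered_on R D.

Definition height_omega1 {T : Type} (le : T -> T -> Prop) : Prop :=
  (forall t, countable_set (preds le t)) /\
  (forall (D : nat -> Prop) (R : nat -> nat -> Prop), countable_wo D R ->
     exists t, order_iso R D le (preds le t)).

Definition level {T : Type} (le : T -> T -> Prop) (t : T) : T -> Prop :=
  fun s => order_iso le (preds le s) le (preds le t).

Definition chain {T : Type} (le : T -> T -> Prop) (b : T -> Prop) : Prop :=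
  forall x y, b x -> b y -> le x y \/ le y x.

Definition branch {T : Type} (le : T -> T -> Prop) (b : T -> Prop) : Prop :=
  chain le b /\
  forall c : T -> Prop, chain le c -> (forall x, b x -> c x) -> forall x, c x -> b x.

Definition aronszajn {T : Type} (le : T -> T -> Prop) : Prop :=
  is_tree le /\ height_omega1 le /\
  (forall t, countable_set (level le t)) /\
  (forall b, branch le b -> countable_set b).

Definition incompatible {T : Type} (le : T -> T -> Prop) (s t : T) : Prop :=
  ~ le s t /\ ~ le t s.

(** Call a node heavy if uncountably many branches of B pass through it.
    Heavy nodes are closed downwards, so if no two of them are incompatible
    they form a downward closed chain, which in an Aronszajn tree is
    countable.  A branch of B either is this chain or leaves it through a
    minimal non-heavy node; the predecessors of such a node form an initial
    segment of the countable well-ordered chain, so there are only countably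
    many possible predecessor sets, each realised inside one countable level.
    Hence there are countably many exit nodes, each on only countably many
    branches of B, and B is countable. *)

From Stdlib Require Import Classical ClassicalEpsilon FunctionalExtensionality
  PropExtensionality Cantor.

Set Implicit Arguments.
Unset Strict Implicit.

Lemma countable_set_sub {U : Type} (A A' : U -> Prop) :
  countable_set A -> (forall x, A' x -> A x) -> countable_set A'.
Proof. intros [f Hf] HA'. exists f. intros x y Hx Hy. apply Hf; auto. Qed.

Lemma countable_set_single {U : Type} (p : U) : countable_set (fun x => x = p).
Proof. exists (fun _ => 0). intros x y -> -> _. reflexivity. Qed.

Lemma countable_set_bigcup {I U : Type} (C : I -> Prop) (F : I -> U -> Prop)
    (A : U -> Prop) :
  countable_set C -> (forall i, C i -> countable_set (F i)) ->
  (forall x, A x -> exists i, C i /\ F i x) -> countable_set A.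
Proof.
  intros [c Hc] HF HA.
  destruct (classic (exists x0, A x0)) as [[x0 Ax0]|HA0].
  2: { exists (fun _ => 0). intros x y Ax. exfalso. eauto. }
  destruct (HA x0 Ax0) as [i0 _].
  destruct (choice (fun x i => A x -> C i /\ F i x)) as [idx Hidx].
  { intros x. destruct (classic (A x)) as [Ax|nAx].
    - destruct (HA x Ax) as [i Hi]. eauto.
    - exists i0. contradiction. }
  destruct (choice (fun i (g : U -> nat) =>
              C i -> forall x y, F i x -> F i y -> g x = g y -> x = y)) as [g Hg].
  { intros i. destruct (classic (C i)) as [Ci|nCi].
    - destruct (HF i Ci) as [g Hg]. eauto.
    - exists (fun _ => 0). contradiction. }
  exists (fun x => to_nat (c (idx x), g (idx x) x)).
  intros x y Ax Ay Exy.
  apply to_nat_inj in Exy. injection Exy as Ec Eg.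
  destruct (Hidx x Ax) as [Cx Fx], (Hidx y Ay) as [Cy Fy].
  assert (Ei : idx x = idx y) by (apply Hc; auto).
  rewrite <- Ei in Eg, Fy. apply (Hg (idx x)); auto.
Qed.

Lemma countable_set_union {U : Type} (A A' : U -> Prop) :
  countable_set A -> countable_set A' -> countable_set (fun x => A x \/ A' x).
Proof.
  intros HA HA'.
  apply (@countable_set_bigcup bool U (fun _ => True)
           (fun i => if i then A else A')).
  - exists (fun i : bool => if i then 0 else 1).
    intros [|] [|] _ _ E; easy.
  - intros [|] _; assumption.
  - intros x [Ax|Ax]; [exists true | exists false]; auto.
Qed.

Section Tree.

Variables (T : Type) (le : T -> T -> Prop).
Hypothesis tree : is_tree le.

Let le_refl : forall x, le x x := proj1 tree.
Let le_trans : forall x y z, le x y -> le y z -> le x z := proj1 (proj2 tree).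
Let le_anti : forall x y, le x y -> le y x -> x = y := proj1 (proj2 (proj2 tree)).
Let preds_wo : forall t, well_ordered_on le (preds le t) := proj2 (proj2 (proj2 tree)).

Lemma tree_below_comparable a b x : le a x -> le b x -> le a b \/ le b a.
Proof.
  intros ax bx.
  destruct (classic (a = x)) as [->|nax]; [right; exact bx|].
  destruct (classic (b = x)) as [->|nbx]; [left; exact ax|].
  destruct (preds_wo x) as [_ [_ [_ [Hlin _]]]].
  apply Hlin; split; assumption.
Qed.

Lemma branch_down_closed b x y : branch le b -> b x -> le y x -> b y.
Proof.
  intros [Hch Hmax] bx yx.
  apply (Hmax (fun z => b z \/ z = y)); [| intros; left; assumption | right; reflexivity].
  assert (Hy : forall z, b z -> le z y \/ le y z).
  { intros z bz. destruct (Hch x z bx bz) as [xz|zx].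
    - right. eauto.
    - exact (tree_below_comparable zx yx). }
  intros z1 z2 [b1| ->] [b2| ->].
  - exact (Hch z1 z2 b1 b2).
  - exact (Hy z1 b1).
  - destruct (Hy z2 b2); [right | left]; assumption.
  - left; apply le_refl.
Qed.

Lemma branch_eq_chain b (Z : T -> Prop) :
  branch le b -> chain le Z -> (forall x, b x -> Z x) -> b = Z.
Proof.
  intros [_ Hmax] HZ bZ.
  apply functional_extensionality; intros x. apply propositional_extensionality.
  split; [apply bZ | exact (Hmax Z HZ bZ x)].
Qed.

Lemma chain_has_least (Z : T -> Prop) u :
  chain le Z -> Z u -> exists m, Z m /\ forall w, Z w -> le m w.
Proof.
  intros HZ Zu.
  assert (below_u : forall w, Z w -> ~ preds le u w -> le u w).
  { intros w Zw npw. destruct (HZ u w Zu Zw) as [uw|wu]; [exact uw|].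
    destruct (classic (w = u)) as [->|nwu]; [apply le_refl|].
    exfalso. apply npw. split; assumption. }
  destruct (classic (exists w, Z w /\ preds le u w)) as [Hex|Hnex].
  - destruct (preds_wo u) as [_ [_ [_ [_ Hmin]]]].
    destruct (Hmin (fun w => Z w /\ preds le u w) (fun w H => proj2 H) Hex)
      as [m [[Zm [mu _]] Hm]].
    exists m; split; [exact Zm|]. intros w Zw.
    destruct (classic (preds le u w)) as [pw|npw].
    + apply Hm; split; assumption.
    + apply (le_trans mu), below_u; assumption.
  - exists u; split; [exact Zu|]. intros w Zw.
    apply below_u; [exact Zw|]. intros pw. apply Hnex. eauto.
Qed.

Lemma exists_minimal_below (Z : T -> Prop) x0 :
  ~ Z x0 -> exists x, ~ Z x /\ le x x0 /\ forall y, preds le x y -> Z y.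
Proof.
  intros nZ0.
  destruct (classic (exists y, preds le x0 y /\ ~ Z y)) as [Hex|Hnex].
  - destruct (preds_wo x0) as [_ [_ [_ [_ Hmin]]]].
    destruct (Hmin (fun y => preds le x0 y /\ ~ Z y) (fun y H => proj1 H) Hex)
      as [m [[[mx0 nmx0] nZm] Hm]].
    exists m. split; [exact nZm|]. split; [exact mx0|].
    intros y [ym nym]. apply NNPP; intros nZy.
    assert (py : preds le x0 y).
    { split; [eauto|]. intros ->. apply nmx0. apply le_anti; assumption. }
    apply nym. apply le_anti; [exact ym | apply Hm; split; assumption].
  - exists x0. split; [exact nZ0|]. split; [apply le_refl|].
    intros y py. apply NNPP; intros nZy. apply Hnex. eauto.
Qed.

Lemma preds_initial_segment (Z : T -> Prop) x :
  chain le Z -> ~ Z x -> (forall y, preds le x y -> Z y) ->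
  (forall y, preds le x y <-> Z y) \/
  exists m, Z m /\ forall y, preds le x y <-> Z y /\ preds le m y.
Proof.
  intros HZ nZx HxZ.
  destruct (classic (exists u, Z u /\ ~ preds le x u)) as [[u Hu]|Hall].
  2: { left. intros y. split; [apply HxZ|]. intros Zy. apply NNPP; eauto. }
  right.
  assert (HW : chain le (fun w => Z w /\ ~ preds le x w))
    by (intros a b [Za _] [Zb _]; apply HZ; assumption).
  destruct (chain_has_least HW Hu) as [m [[Zm npm] Hm]].
  exists m. split; [exact Zm|]. intros y. split.
  - intros [yx nyx]. assert (Zy : Z y) by (apply HxZ; split; assumption).
    split; [exact Zy|].
    destruct (HZ m y Zm Zy) as [my|ym].
    + exfalso. apply npm. split; [eauto|]. intros ->. contradiction.
    + split; [exact ym|]. intros ->. apply npm. split; assumption.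
  - intros [Zy [ym nym]]. apply NNPP; intros npy.
    apply nym. apply le_anti; [exact ym | apply Hm; split; assumption].
Qed.

End Tree.

Section Aronszajn.

Variables (T : Type) (le : T -> T -> Prop).
Hypothesis aron : aronszajn le.

Lemma same_preds_countable (S P : T -> Prop) :
  (forall x, S x -> forall y, preds le x y <-> P y) -> countable_set S.
Proof.
  intros HS.
  destruct (classic (exists x0, S x0)) as [[x0 Sx0]|HS0].
  2: { exists (fun _ => 0). intros x y Sx. exfalso. eauto. }
  destruct aron as [_ [_ [Hlev _]]].
  apply (countable_set_sub (Hlev x0)). intros x Sx.
  exists (fun y => y). split; [|split; [|split]].
  - intros y py. apply (HS x0 Sx0), (HS x Sx); exact py.
  - intros y py. exists y. split; [apply (HS x Sx), (HS x0 Sx0); exact py | reflexivity].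
  - auto.
  - reflexivity.
Qed.

Lemma down_closed_chain_countable (Z : T -> Prop) :
  chain le Z -> (forall t u, Z u -> le t u -> Z t) -> countable_set Z.
Proof.
  intros HZ Zdown. destruct aron as [_ [[Hpreds _] [_ Hbr]]].
  apply NNPP; intros nZ. apply nZ, Hbr. split; [exact HZ|].
  intros c Hc Zc y cy. apply NNPP; intros nZy. apply nZ.
  apply (countable_set_sub (Hpreds y)). intros u Zu.
  destruct (Hc u y (Zc u Zu) cy) as [uy|yu].
  - split; [exact uy|]. intros ->. contradiction.
  - exfalso. apply nZy. exact (Zdown y u Zu yu).
Qed.

End Aronszajn.

Section HeavyNodes.

Variables (T : Type) (le : T -> T -> Prop) (B : (T -> Prop) -> Prop).
Hypothesis aron : aronszajn le.
Hypothesis B_branches : forall b, B b -> branch le b.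

Definition heavy (t : T) : Prop := ~ countable_set (fun b => B b /\ b t).

Let tree : is_tree le := proj1 aron.

Lemma heavy_down_closed t u : heavy u -> le t u -> heavy t.
Proof.
  intros Hu tu Ct. apply Hu. apply (countable_set_sub Ct).
  intros b [Bb bu]. split; [exact Bb|].
  exact (branch_down_closed tree (B_branches Bb) bu tu).
Qed.

Hypothesis heavy_chain : chain le heavy.

Definition exit_node (x : T) : Prop :=
  ~ heavy x /\ forall y, preds le x y -> heavy y.

Lemma heavy_countable : countable_set heavy.
Proof. exact (down_closed_chain_countable aron heavy_chain heavy_down_closed). Qed.

Lemma exit_node_countable : countable_set exit_node.
Proof.
  pose (S_all := fun x => exit_node x /\ forall y, preds le x y <-> heavy y).
  pose (S_below := fun m x =>
          exit_node x /\ forall y, preds le x y <-> heavy y /\ preds le m y).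
  assert (C_all : countable_set S_all)
    by exact (same_preds_countable aron (S := S_all) (fun x Hx => proj2 Hx)).
  assert (C_below : countable_set (fun x => exists m, heavy m /\ S_below m x)).
  { apply (countable_set_bigcup (F := S_below) heavy_countable); [|auto].
    intros m _. exact (same_preds_countable aron (S := S_below m) (fun x Hx => proj2 Hx)). }
  apply (countable_set_sub (countable_set_union C_all C_below)).
  intros x [nhx Hx].
  destruct (preds_initial_segment tree heavy_chain nhx Hx) as [Hseg|[m [hm Hseg]]].
  - left. exact (conj (conj nhx Hx) Hseg).
  - right. exists m. exact (conj hm (conj (conj nhx Hx) Hseg)).
Qed.

Lemma branch_exits_or_eq_heavy b :
  B b -> (exists x, exit_node x /\ b x) \/ b = heavy.
Proof.
  intros Bb.
  destruct (classic (exists x0, b x0 /\ ~ heavy x0)) as [[x0 [bx0 nh0]]|Hin].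
  - left. destruct (exists_minimal_below tree (Z := heavy) nh0) as [x [nhx [xx0 Hx]]].
    exists x. split; [split; assumption|].
    exact (branch_down_closed tree (B_branches Bb) bx0 xx0).
  - right. apply (branch_eq_chain (B_branches Bb) heavy_chain).
    intros x bx. apply NNPP; intros nhx. eauto.
Qed.

Lemma branches_countable : countable_set B.
Proof.
  assert (C_exiting : countable_set (fun b => exists x, exit_node x /\ B b /\ b x)).
  { apply (countable_set_bigcup (F := fun x b => B b /\ b x) exit_node_countable); [|auto].
    intros x [nhx _]. exact (NNPP _ nhx). }
  apply (countable_set_sub (countable_set_union C_exiting (countable_set_single heavy))).
  intros b Bb. destruct (branch_exits_or_eq_heavy Bb) as [[x [Hx bx]]|Eb].
  - left. exists x. auto.
  - right. exact Eb.
Qed.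

End HeavyNodes.

Theorem lemma4p7 (T : Type) (le : T -> T -> Prop) (B : (T -> Prop) -> Prop) :
  aronszajn le ->
  (forall b, B b -> branch le b) ->
  ~ countable_set B ->
  (forall b1 b2, B b1 -> B b2 -> order_iso le b1 le b2 -> b1 = b2) ->
  exists s t : T, incompatible le s t /\
    ~ countable_set (fun b => B b /\ b s) /\
    ~ countable_set (fun b => B b /\ b t).
Proof.
  (* The argument does not need the branches of B to have distinct order types. *)
  intros aron B_branches B_uncountable _.
  apply NNPP; intros no_pair.
  apply B_uncountable, (branches_countable aron B_branches).
  intros s t hs ht. apply NNPP; intros Hst. apply no_pair.
  exists s, t. split; [split; intros ?; apply Hst; auto | split; assumption].
Qed.
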